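(* Let $(P_i)_{i\ge0}$ be any walk in $\mathbb Z^2$ (in particular an $\alpha$-random walk), $k\ge1$, $m\ge1$ integers. For $i\ge1$ let $X_i=1$ if $P_i$ is visible (else $0$), $X_i(m)=1$ if $P_i$ is visible at level $m$ (else $0$), $Z_i(m)=X_i(m)-X_i$, and set $$\overline S_{n,k}=\frac1n\sum_{i=1}^n X_i\cdots X_{i+k-1},\quad \overline S_{n,k}(m)=\frac1n\sum_{i=1}^n X_i(m)\cdots X_{i+k-1}(m),\quad \overline Z_n(m)=\frac1n\sum_{i=1}^n Z_i(m).$$ Then for every $n\ge1$, $$\overline S_{n,k}(m)-k\overline Z_n(m)-\frac{k^2}{2n}\le\overline S_{n,k}\le\overline S_{n,k}(m).$$
   Context: A lattice point $(a,b)$ is visible if $\gcd(a,b)=1$, and visible at level $m$ if no prime $p<m$ divides both $a$ and $b$. *)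

From mathcomp Require Import all_boot all_order all_algebra.
Set Implicit Arguments. Unset Strict Implicit. Unset Printing Implicit Defensive.
Import Order.TTheory GRing.Theory Num.Theory.
Local Open Scope ring_scope.

Definition visible (p : int * int) : bool := gcdz p.1 p.2 == 1%Z.

Definition visible_at (m : nat) (p : int * int) : bool :=
  [forall q : 'I_m, prime q ==> ~~ ((q %| `|p.1|)%N && (q %| `|p.2|)%N)].

Definition Xv (P : nat -> int * int) (i : nat) : rat := (visible (P i))%:R.
Definition Xm (P : nat -> int * int) (m i : nat) : rat := (visible_at m (P i))%:R.
Definition Zm (P : nat -> int * int) (m i : nat) : rat := Xm P m i - Xv P i.

Definition Sbar (P : nat -> int * int) (n k : nat) : rat :=
  (n%:R)^-1 * \sum_(1 <= i < n.+1) \prod_(i <= j < i + k) Xv P j.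
Definition Sbar_m (P : nat -> int * int) (m n k : nat) : rat :=
  (n%:R)^-1 * \sum_(1 <= i < n.+1) \prod_(i <= j < i + k) Xm P m j.
Definition Zbar (P : nat -> int * int) (m n : nat) : rat :=
  (n%:R)^-1 * \sum_(1 <= i < n.+1) Zm P m i.

(** The indicator of visibility is dominated by that of visibility at level
    [m], so each window product [X_i ... X_(i+k-1)] is dominated by its level-[m]
    analogue; this gives the upper bound.  For the lower bound, a difference of
    products of numbers in [0, 1] is at most the sum of the termwise
    differences, so the gap in the window at [i] is at most
    [Z_i + ... + Z_(i+k-1)].  Summing over [i], each [Z_j] is counted at most [k]
    times, except for the window overhang beyond [n], which costs at most
    [0 + 1 + ... + (k-1) <= k^2/2]. *)
From mathcomp Require Import all_boot all_order all_algebra.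
From mathcomp Require Import ring lra.
Import Order.TTheory GRing.Theory Num.Theory.
Local Open Scope ring_scope.

Lemma prodrB_le_sumrB {R : numDomainType} {I : Type} (r : seq I) {a b : I -> R} :
  (forall i, 0 <= a i <= b i) -> (forall i, b i <= 1) ->
  \prod_(i <- r) b i - \prod_(i <- r) a i <= \sum_(i <- r) (b i - a i).
Proof.
move=> ab b1; elim: r => [|x r IHr]; first by rewrite !big_nil subrr.
rewrite !big_cons.
have /andP [ax0 axbx] := ab x.
have AB : \prod_(i <- r) a i <= \prod_(i <- r) b i by apply: ler_prod => i _.
have Br1 : \prod_(i <- r) b i <= 1.
  apply: prodr_ile1 => i _; have /andP [ai0 aibi] := ab i.
  by rewrite (le_trans ai0 aibi) b1.
rewrite [_ * _ - _](_ : _ = (b x - a x) * \prod_(i <- r) b i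
                            + a x * (\prod_(i <- r) b i - \prod_(i <- r) a i));
  last by ring.
apply: lerD; first by apply: ler_piMr; rewrite // subr_ge0.
by apply: le_trans IHr; apply: ler_piMl; rewrite ?subr_ge0 // (le_trans axbx).
Qed.

Lemma sumr_shift_le (R : numDomainType) (Z : nat -> R) (m n t : nat) :
  (m <= n)%N -> (forall j, 0 <= Z j <= 1) ->
  \sum_(m <= i < n) Z (i + t)%N <= \sum_(m <= i < n) Z i + t%:R.
Proof.
move=> le_mn Z01.
have -> : \sum_(m <= i < n) Z (i + t)%N = \sum_(m + t <= j < n + t) Z j.
  by rewrite big_addn addnK.
have Z0 j : 0 <= Z j by have /andP[] := Z01 j.
have split_hi : \sum_(m <= j < n + t) Z j
    = \sum_(m <= j < n) Z j + \sum_(n <= j < n + t) Z j.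
  by rewrite -big_cat_nat // leq_addr.
have split_lo : \sum_(m <= j < n + t) Z j
    = \sum_(m <= j < m + t) Z j + \sum_(m + t <= j < n + t) Z j.
  by rewrite -big_cat_nat ?leq_addr ?leq_add2r.
have overhang : \sum_(n <= j < n + t) Z j <= t%:R.
  rewrite -[t in t%:R](addKn n) -sumr_const_nat.
  by apply: ler_sum => j _; have /andP[] := Z01 j.
have head_ge0 : 0 <= \sum_(m <= j < m + t) Z j by apply: sumr_ge0.
rewrite -(lerD2l (\sum_(m <= j < m + t) Z j)) -split_lo split_hi addrCA.
by apply: lerD; rewrite // -[X in X <= _]add0r lerD.
Qed.

Lemma double_sum_lt_le_sqr (k : nat) : ((\sum_(0 <= t < k) t).*2 <= k ^ 2)%N.
Proof.
rewrite bin2_sum bin2 halfK.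
by apply: leq_trans (leq_subr _ _) _; rewrite leq_mul2l leq_pred orbT.
Qed.

Lemma sum_window_prodrB_le {R : numFieldType} {a b : nat -> R} (m n k : nat) :
  (m <= n)%N -> (forall j, 0 <= a j <= b j) -> (forall j, b j <= 1) ->
  \sum_(m <= i < n) (\prod_(i <= j < i + k) b j - \prod_(i <= j < i + k) a j)
    <= k%:R * \sum_(m <= i < n) (b i - a i) + (k ^ 2)%:R / 2%:R.
Proof.
move=> le_mn ab b1.
have gap01 j : 0 <= b j - a j <= 1.
  have /andP [aj0 ajbj] := ab j.
  by rewrite subr_ge0 ajbj /= lerBlDl (le_trans (b1 j)) // lerDr.
apply: le_trans
  (_ : \sum_(m <= i < n) \sum_(0 <= t < k) (b (t + i)%N - a (t + i)%N) <= _).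
  apply: ler_sum => i _; apply: le_trans (prodrB_le_sumrB _ ab b1) _.
  by rewrite -{1}[i]add0n big_addn addKn.
rewrite exchange_big_nat /=.
apply: le_trans (_ : \sum_(0 <= t < k) (\sum_(m <= i < n) (b i - a i) + t%:R) <= _).
  apply: ler_sum => t _; under eq_bigr do rewrite addnC.
  exact: sumr_shift_le.
rewrite big_split /= sumr_const_nat subn0 mulr_natl -natr_sum lerD2l.
by rewrite ler_pdivlMr // -natrM ler_nat muln2 double_sum_lt_le_sqr.
Qed.

Lemma visible_at_of_visible (m : nat) (p : int * int) :
  visible p -> visible_at m p.
Proof.
move=> /eqP [coprime_p]; apply/forallP => q; apply/implyP => q_prime.
apply/negP => /andP [q_dvd1 q_dvd2].
have : (q %| gcdn `|p.1| `|p.2|)%N by rewrite dvdn_gcd q_dvd1 q_dvd2.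
by rewrite coprime_p dvdn1 => /eqP q1; rewrite q1 in q_prime.
Qed.

Lemma Xv_ge0_le_Xm (P : nat -> int * int) (m j : nat) : 0 <= Xv P j <= Xm P m j.
Proof.
rewrite /Xv /Xm ler0n /=; case vis: (visible (P j)); last exact: ler0n.
by rewrite visible_at_of_visible.
Qed.

Lemma Xm_le1 (P : nat -> int * int) (m j : nat) : Xm P m j <= 1.
Proof. by rewrite /Xm lern1 leq_b1. Qed.

Theorem lemma7 (P : nat -> int * int) (k m n : nat) :
  (1 <= k)%N -> (1 <= m)%N -> (1 <= n)%N ->
  Sbar_m P m n k - k%:R * Zbar P m n - (k ^ 2)%:R / (2 * n)%:R <= Sbar P n k
  /\ Sbar P n k <= Sbar_m P m n k.
Proof.
move=> _ _ _.
have ninv_ge0 : 0 <= (n%:R : rat)^-1 by rewrite invr_ge0 ler0n.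
have XvXm := Xv_ge0_le_Xm P m; have Xm1 := Xm_le1 P m.
rewrite /Sbar /Sbar_m /Zbar /Zm; split; last first.
  apply: ler_wpM2l => //; apply: ler_sum => i _.
  by apply: ler_prod => j _; apply: XvXm.
have gap := sum_window_prodrB_le 1 n.+1 k (ltn0Sn n) XvXm Xm1.
rewrite sumrB in gap.
set SB := \sum_(1 <= i < n.+1) _ in gap *; set SZ := \sum_(1 <= i < n.+1) (_ - _) in gap *.
rewrite natrM invfM (_ : _ - _ - _ = n%:R^-1 * (SB - k%:R * SZ - (k ^ 2)%:R / 2)); last by ring.
by apply: ler_wpM2l => //; lra.
Qed.
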